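(* Let $K$ and $S$ be compact Hausdorff spaces. The following are equivalent: (i) there exists a U-embedding $T\colon C(K)\to C(S)$; (ii) there exists a continuous embedding $h\colon K\to S$ admitting a linear extension operator of norm one, with $h(K)$ a $G_\delta$-subset of $S$.
   Context: $C(K)$, $C(S)$ carry the sup norm. A linear isometry $T\colon X\to Y$ is a U-embedding if every $x^*\in X^*$ has a unique $y^*\in Y^*$ with $T^*(y^* )=x^*$ and $\|y^*\|=\|x^*\|$. For a continuous embedding (homeomorphism onto its image) $h\colon K\to S$, a linear operator $v\colon C(K)\to C(S)$ is a linear extension operator for $h$ if $(vf)(h(k))=f(k)$ for every $f\in C(K)$ and $k\in K$ (equivalently $v^*(\delta_{h(k)})=\delta_k$ for all $k\in K$). *)

From HB Require Import structures.
From mathcomp Require Import all_boot all_order all_algebra.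
From mathcomp Require Import all_classical all_reals all_analysis.
Set Implicit Arguments. Unset Strict Implicit. Unset Printing Implicit Defensive.
Import Order.TTheory GRing.Theory Num.Theory.
Import numFieldNormedType.Exports.
Local Open Scope classical_set_scope.
Local Open Scope ring_scope.

(* Elements of C(K) are represented as functions f : K -> R with [continuous f]. *)

Definition supnorm (R : realType) (K : topologicalType) (f : K -> R) : R :=
  sup [set `|f k| | k in [set: K]].

Definition maps_cont (R : realType) (K S : topologicalType)
  (T : (K -> R) -> (S -> R)) : Prop :=
  forall f : K -> R, continuous f -> continuous (T f).

Definition lin_op (R : realType) (K S : topologicalType)
  (T : (K -> R) -> (S -> R)) : Prop :=
  forall (f g : K -> R) (a : R), continuous f -> continuous g ->
    T (fun k => a * f k + g k) = (fun s => a * T f s + T g s).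

Definition isometry_on (R : realType) (K S : topologicalType)
  (T : (K -> R) -> (S -> R)) : Prop :=
  forall f : K -> R, continuous f -> supnorm (T f) = supnorm f.

Definition op_bounded (R : realType) (K S : topologicalType)
  (T : (K -> R) -> (S -> R)) : Prop :=
  exists M : R, forall f : K -> R, continuous f -> supnorm (T f) <= M * supnorm f.

Definition opnorm (R : realType) (K S : topologicalType)
  (T : (K -> R) -> (S -> R)) : R :=
  sup [set supnorm (T f) | f in [set f : K -> R | continuous f /\ supnorm f <= 1]].

Definition dual_elem (R : realType) (K : topologicalType) (x : (K -> R) -> R) : Prop :=
  (forall (f g : K -> R) (a : R), continuous f -> continuous g ->
     x (fun k => a * f k + g k) = a * x f + x g) /\
  (exists M : R, forall f : K -> R, continuous f -> `|x f| <= M * supnorm f).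

Definition dnorm (R : realType) (K : topologicalType) (x : (K -> R) -> R) : R :=
  sup [set `|x f| | f in [set f : K -> R | continuous f /\ supnorm f <= 1]].

(* U-embedding: linear isometry T : C(K) -> C(S) such that every x* in C(K)^*
   has a unique norm-preserving y* in C(S)^* with T^* y* = x*.
   Two functionals on C(S) are equal when they agree on C(S). *)
Definition U_embedding (R : realType) (K S : topologicalType)
  (T : (K -> R) -> (S -> R)) : Prop :=
  maps_cont T /\ lin_op T /\ isometry_on T /\
  forall x : (K -> R) -> R, dual_elem x ->
    exists y : (S -> R) -> R,
      [/\ dual_elem y,
          (forall f : K -> R, continuous f -> y (T f) = x f),
          dnorm y = dnorm x &
          forall y' : (S -> R) -> R, dual_elem y' ->
            (forall f : K -> R, continuous f -> y' (T f) = x f) ->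
            dnorm y' = dnorm x ->
            forall g : S -> R, continuous g -> y' g = y g].

(* continuous embedding = homeomorphism onto its image *)
Definition top_embedding (K S : topologicalType) (h : K -> S) : Prop :=
  [/\ continuous h, injective h &
      forall U : set K, open U -> exists V : set S, open V /\ h @` U = V `&` range h].

Definition ext_op (R : realType) (K S : topologicalType) (h : K -> S)
  (v : (K -> R) -> (S -> R)) : Prop :=
  [/\ maps_cont v, lin_op v &
      forall f : K -> R, continuous f -> forall k : K, v f (h k) = f k].

Definition Gdelta (S : topologicalType) (A : set S) : Prop :=
  exists U : nat -> set S, (forall n, open (U n)) /\ A = \bigcap_n U n.

From HB Require Import structures.
From mathcomp Require Import all_boot all_order all_algebra.
From mathcomp Require Import all_classical all_reals all_analysis.
From mathcomp Require Import ring lra.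
Import Order.TTheory GRing.Theory Num.Theory.
Import numFieldNormedType.Exports.
Local Open Scope classical_set_scope.
Local Open Scope ring_scope.

(* (ii) -> (i): the closed G_delta set h(K) is the peak set [phi = 1] of a
   continuous phi : S -> [0, 1], and T f := phi * v f is a linear isometry.  If y
   is a norm-preserving extension of x, testing y on f +- (1 - phi) g with x f
   close to ||x|| shows that y kills every (1 - phi) g, hence every function
   vanishing on h(K); so y g = x (g o h) is forced.
   (i) -> (ii): for k in K, compactness yields s in S with |T g s| = 1 for every
   peak function g at k, and then T f s = f k * u s with u := T 1.  The functional
   g |-> u s * g s is a norm-one extension of the evaluation at k, so uniqueness
   of such extensions makes s unique; this defines h k.  Then h is a continuous
   injection, h(K) = [|u| = 1] is a G_delta, and f |-> u * T f is a norm-one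
   extension operator. *)

Set Implicit Arguments.
Unset Strict Implicit.
Unset Printing Implicit Defensive.

Section ContinuousRealFunctions.
Variables (R : realType) (X : topologicalType).
Implicit Types f g : X -> R.

Lemma continuous_cst (c : R) : continuous (fun _ : X => c).
Proof. exact: cst_continuous. Qed.

Lemma continuous_add f g :
  continuous f -> continuous g -> continuous (fun x => f x + g x).
Proof. by move=> cf cg x; exact: (@continuousD R R^o X f g x (cf x) (cg x)). Qed.

Lemma continuous_mul f g :
  continuous f -> continuous g -> continuous (fun x => f x * g x).
Proof. by move=> cf cg x; exact: (@continuousM R X f g x (cf x) (cg x)). Qed.

Lemma continuous_opp f : continuous f -> continuous (fun x => - f x).
Proof. by move=> cf x; exact: (@continuousN R R^o X f x (cf x)). Qed.

Lemma continuous_sub f g :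
  continuous f -> continuous g -> continuous (fun x => f x - g x).
Proof. by move=> cf cg; apply: continuous_add => //; exact: continuous_opp. Qed.

Lemma continuous_scale (a : R) f : continuous f -> continuous (fun x => a * f x).
Proof. by move=> cf; apply: continuous_mul => //; exact: continuous_cst. Qed.

Lemma continuous_lincomb (a : R) f g :
  continuous f -> continuous g -> continuous (fun x => a * f x + g x).
Proof. by move=> cf cg; apply: continuous_add => //; exact: continuous_scale. Qed.

Lemma continuous_norm f : continuous f -> continuous (fun x => `|f x|).
Proof. by move=> cf x; apply: continuous_comp (cf x) _; exact: norm_continuous. Qed.

End ContinuousRealFunctions.
Arguments continuous_cst {R X} c.
Arguments continuous_scale {R X} a {f}.
Arguments continuous_lincomb {R X} a {f g}.

Lemma normD_normB_le (R : realType) (a c D : R) :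
  `|a + c| <= D -> `|a - c| <= D -> `|a| + `|c| <= D.
Proof.
move=> /ler_normlP[h1 h2] /ler_normlP[h3 h4].
have [a0|a0] := lerP 0 a; have [c0|c0] := lerP 0 c;
  rewrite ?(ger0_norm a0) ?(ltr0_norm a0) ?(ger0_norm c0) ?(ltr0_norm c0); lra.
Qed.

Lemma eq0_norm_small (R : realType) (a M : R) : 0 <= M ->
  (forall e, 0 < e -> `|a| <= M * e) -> a = 0.
Proof.
move=> M0 aM; apply/normr0_eq0/le_anti; rewrite normr_ge0 andbT.
apply/ler_addgt0Pr => e e0; rewrite add0r.
have M1 : 0 < M + 1 by rewrite ltr_wpDl.
apply: le_trans (aM _ (divr_gt0 e0 M1)) _.
rewrite mulrCA; apply: ler_piMr; first exact: ltW.
by rewrite ler_pdivrMr // mul1r lerDl.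
Qed.

Lemma normr_mid_eq1 (R : realType) (a b : R) : `|a| <= 1 -> `|b| <= 1 ->
  `|2^-1 * a + 2^-1 * b| = 1 -> `|a| = 1 /\ `|b| = 1.
Proof.
move=> a1 b1; rewrite -mulrDr normrM ger0_norm ?invr_ge0 // => ab.
have := ler_normD a b; split; apply/le_anti; rewrite ?a1 ?b1 /=; lra.
Qed.

Lemma normr_eq1_mulrr (R : realDomainType) (a : R) : `|a| = 1 -> a * a = 1.
Proof. by move=> a1; rewrite -expr2 -real_normK ?num_real // a1 expr1n. Qed.

Section Urysohn.
Variables (R : realType) (S : topologicalType).
Hypotheses (hS : hausdorff_space S) (cS : compact [set: S]).

Lemma urysohn01 (A B : set S) : closed A -> closed B -> A `&` B = set0 ->
  exists f : S -> R, [/\ continuous f, (forall s, A s -> f s = 0),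
    (forall s, B s -> f s = 1) & (forall s, 0 <= f s <= 1)].
Proof.
move=> cA cB AB.
have [f [cf fA fB fr]] := urysohn_ext_itv (compact_normal hS cS) cA cB AB (@ltr01 R).
exists f; split => // [s As|s Bs|s]; [exact: fA | exact: fB |].
by have /= := fr (f s) (ex_intro2 _ _ s I erefl); rewrite in_itv.
Qed.

Lemma separate_point (B : set S) (a : S) : closed B -> ~ B a ->
  exists g : S -> R, [/\ continuous g, g a = 1 & forall b, B b -> g b = 0].
Proof.
move=> cB Ba; have ca := @accessible_closed_set1 S (hausdorff_accessible hS) a.
have BaE : B `&` [set a] = set0.
  by apply/seteqP; split => // z [Bz /= za]; apply: Ba; rewrite -za.
by have [g [cg gB ga _]] := urysohn01 cB ca BaE; exists g; split => //; exact: ga.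
Qed.

Lemma separate_points (a b : S) : a <> b ->
  exists g : S -> R, [/\ continuous g, g a = 1 & g b = 0].
Proof.
move=> ab; have cb := @accessible_closed_set1 S (hausdorff_accessible hS) b.
by have [g [cg ga gb]] := separate_point cb ab; exists g; split => //; exact: gb.
Qed.

Lemma closed_range_compact (K : topologicalType) (h : K -> S) :
  compact [set: K] -> continuous h -> closed (range h).
Proof.
move=> cK ch; apply: compact_closed hS _; apply: continuous_compact cK.
exact: continuous_subspaceT.
Qed.

End Urysohn.

Lemma compact_directed_meet (X : topologicalType) (I : Type) (D : set I)
    (Z : I -> set X) : compact [set: X] -> D !=set0 ->
  (forall i, D i -> closed (Z i)) -> (forall i, D i -> Z i !=set0) ->
  (forall i j, D i -> D j -> exists2 k, D k & Z k `<=` Z i `&` Z j) ->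
  exists x, forall i, D i -> Z i x.
Proof.
move=> cX [i0 Di0] cZ nZ dirZ.
have FF : Filter (filter_from D Z) by apply: filter_from_filter; first by exists i0.
have PF : ProperFilter (filter_from D Z) by exact: filter_from_proper.
have [x [_ clx]] := cX _ PF filterT.
exists x => i Di; apply: (cZ i Di) => B Bx.
by have [y [? ?]] := clx (Z i) B (ex_intro2 _ _ i Di (@subset_refl _ (Z i))) Bx; exists y.
Qed.

Lemma cluster_comp_eq (R : realType) (K S : topologicalType) (h : K -> S)
    (Phi : S -> R) (psi : K -> R) (k : K) (s : S) :
  continuous Phi -> continuous psi -> (forall k', Phi (h k') = psi k') ->
  cluster (h @ k) s -> Phi s = psi k.
Proof.
move=> cPhi cpsi Phih cl; apply/eqP; rewrite -subr_eq0 -normr_eq0.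
apply: contraT => ne.
set e := `|Phi s - psi k|.
have e2 : 0 < e / 2 by rewrite divr_gt0 // lt_def ne normr_ge0.
have Fh : (h @ k) [set s' | exists k', `|psi k - psi k'| < e / 2 /\ s' = h k'].
  by move/cvgrPdist_lt: (cpsi k) => /(_ _ e2); apply: filterS => k' ?; exists k'.
have nPhi : nbhs s [set s' | `|Phi s - Phi s'| < e / 2].
  by move/cvgrPdist_lt: (cPhi s) => /(_ _ e2).
have [_ [[k' [k'k ->]] /=]] := cl _ _ Fh nPhi; rewrite Phih => sk'.
have : e < e.
  rewrite [in X in X < _]/e -(subrKA (psi k')).
  apply: le_lt_trans (ler_normD _ _) _; rewrite [in ltRHS](splitr e).
  by rewrite [X in _ + X]distrC; exact: ltrD.
by rewrite ltxx.
Qed.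

Lemma top_embedding_compact (K S : topologicalType) (h : K -> S) :
  compact [set: K] -> hausdorff_space S -> continuous h -> injective h ->
  top_embedding h.
Proof.
move=> cK hS ch hinj; split => // U oU.
exists (~` (h @` ~` U)); split.
  rewrite openC; apply: compact_closed hS _; apply: continuous_compact.
    exact: continuous_subspaceT.
  by apply: subclosed_compact cK _ => //; exact: open_closedC.
apply/seteqP; split=> [_ [k Uk <-]|s [nUs [k _ ks]]].
  by split; [move=> [k' nUk' /hinj k'k]; apply: nUk'; rewrite k'k | exists k].
rewrite -ks in nUs *; exists k => //.
by apply: contrapT => nUk; apply: nUs; exists k.
Qed.

Section SupNorm.
Variables (R : realType) (X : topologicalType).
Hypothesis cX : compact [set: X].
Implicit Types f g : X -> R.

Lemma supnorm_empty f : [set: X] = set0 -> supnorm f = 0.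
Proof. by move=> X0; rewrite /supnorm X0 image_set0 sup0. Qed.

Lemma supnorm_le f (M : R) : 0 <= M -> (forall x, `|f x| <= M) -> supnorm f <= M.
Proof.
move=> M0 fM; have [[x _]|/set0P/negP/negPn/eqP X0] := pselect ([set: X] !=set0).
  by apply: ge_sup => [|_ [y _ <-]]; [exists `|f x|, x|].
by rewrite supnorm_empty.
Qed.

Lemma supnorm0_le1 : supnorm (fun _ : X => 0 : R) <= 1.
Proof. by apply: supnorm_le => // x; rewrite normr0. Qed.

Lemma supnorm_ubound f : continuous f -> has_ubound [set `|f x| | x in [set: X]].
Proof.
move=> cf; have cpt : compact [set f x | x in [set: X]].
  by apply: continuous_compact => //; exact: continuous_subspaceT.
have [M [_ HM]] := compact_bounded cpt.
by exists (M + 1) => _ [x _ <-]; apply: (HM (M + 1)); [rewrite ltrDl | exists x].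
Qed.

Lemma normr_le_supnorm f x : continuous f -> `|f x| <= supnorm f.
Proof. by move=> cf; apply: ub_le_sup; [exact: supnorm_ubound | exists x]. Qed.

Lemma supnorm_ge0 f : continuous f -> 0 <= supnorm f.
Proof.
move=> cf; have [[x _]|/set0P/negP/negPn/eqP X0] := pselect ([set: X] !=set0).
  exact: le_trans (normr_ge0 (f x)) (normr_le_supnorm x cf).
by rewrite supnorm_empty.
Qed.

Lemma supnorm_attained f :
  continuous f -> [set: X] !=set0 -> exists x, `|f x| = supnorm f.
Proof.
move=> cf [x0 _].
have cE : compact [set `|f x| | x in [set: X]].
  exact: continuous_compact (continuous_subspaceT (continuous_norm cf)) cX.
have ne : [set `|f x| | x in [set: X]] !=set0 by exists `|f x0|, x0.
have [x _ fx] := compact_closed (@Rhausdorff R) cE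
  (closure_sup ne (supnorm_ubound cf)).
by exists x.
Qed.

Lemma supnorm_cst1 : [set: X] !=set0 -> supnorm (fun _ : X => 1 : R) = 1.
Proof.
move=> [x _]; apply/le_anti/andP; split.
  by apply: supnorm_le => // y; rewrite normr1.
by have := normr_le_supnorm x (continuous_cst 1); rewrite normr1.
Qed.

End SupNorm.
Arguments supnorm0_le1 {R X}.

Lemma Gdelta_normr_eq1 (R : realType) (S : topologicalType) (w : S -> R) :
  continuous w -> (forall s, `|w s| <= 1) -> Gdelta [set s | `|w s| = 1].
Proof.
move=> cw w1; exists (fun n => [set s | 1 - n.+1%:R^-1 < `|w s|]); split.
  move=> n; apply: (@open_comp S R (fun s => `|w s|) [set r | 1 - n.+1%:R^-1 < r]).
    by move=> s _; exact: continuous_norm.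
  exact: open_gt.
apply/seteqP; split=> [s /= ws1 n _|s ws].
  by rewrite /= ws1 ltrBlDr ltrDl invr_gt0 ltr0n.
apply/le_anti; rewrite w1 /=; apply/ler_addgt0Pl => e e0.
have [n ne] := ltr_add_invr e0; rewrite add0r in ne.
have := ws n I; rewrite /= ltrBlDl => ltw.
by apply: le_trans (ltW ltw) _; rewrite lerD2r ltW.
Qed.

Section PeakFunction.
Variables (R : realType) (S : topologicalType).
Implicit Types t : nat -> S -> R.

Fixpoint partial_max t (N : nat) (s : S) : R :=
  if N is N'.+1 then Num.max (partial_max t N' s) (t N' s) else 0.

Lemma continuous_partial_max t N :
  (forall n, continuous (t n)) -> continuous (partial_max t N).
Proof.
move=> ct; elim: N => [|N IH] /=; first exact: continuous_cst.
exact: max_fun_continuous.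
Qed.

Lemma partial_max_ge t N n s : (n < N)%N -> t n s <= partial_max t N s.
Proof.
elim: N => [//|N IH]; rewrite ltnS leq_eqVlt => /orP[/eqP ->|/IH tn] /=.
  by rewrite le_max lexx orbT.
by rewrite le_max tn.
Qed.

Lemma partial_max_ge0 t N s : 0 <= partial_max t N s.
Proof. by elim: N => [|N IH] //=; rewrite le_max IH. Qed.

Lemma partial_max_le t N s c :
  0 <= c -> (forall n, (n < N)%N -> t n s <= c) -> partial_max t N s <= c.
Proof.
move=> c0; elim: N => [|N IH] tc //=.
by rewrite ge_max IH ?tc // => n nN; apply: tc; exact: ltnW.
Qed.

Section DecayingSup.
Variable t : nat -> S -> R.
Hypotheses (ct : forall n, continuous (t n))
  (t_decay : forall n s, 0 <= t n s <= n.+1%:R^-1).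

Let E s := [set t n s | n in [set: nat]].

Let has_sup_E s : has_sup (E s).
Proof.
split; first by exists (t 0%N s), 0%N.
exists 1 => _ [n _ <-]; apply: le_trans (andP (t_decay n s)).2 _.
by rewrite invf_le1 ?ltr0n // ler1n.
Qed.

Lemma sup_decay_ge n s : t n s <= sup (E s).
Proof. by apply: ub_le_sup; [case: (has_sup_E s) | exists n]. Qed.

Lemma sup_decay_ge0 s : 0 <= sup (E s).
Proof. exact: le_trans (andP (t_decay 0%N s)).1 (sup_decay_ge 0%N s). Qed.

Lemma sup_decay_le1 s : sup (E s) <= 1.
Proof.
apply: ge_sup => [|_ [n _ <-]]; first by case: (has_sup_E s).
apply: le_trans (andP (t_decay n s)).2 _.
by rewrite invf_le1 ?ltr0n // ler1n.
Qed.

Lemma sup_decay_approx N s :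
  partial_max t N s <= sup (E s) <= partial_max t N s + N.+1%:R^-1.
Proof.
apply/andP; split.
  by apply: partial_max_le => [|n _]; [exact: sup_decay_ge0 | exact: sup_decay_ge].
apply: ge_sup => [|_ [n _ <-]]; first by case: (has_sup_E s).
have [nN|Nn] := ltnP n N.
  by rewrite -[t n s]addr0 lerD ?partial_max_ge // invr_ge0 ler0n.
rewrite -[t n s]add0r lerD ?partial_max_ge0 //.
apply: le_trans (andP (t_decay n s)).2 _.
by rewrite lef_pV2 ?posrE ?ltr0n // ler_nat.
Qed.

Lemma continuous_sup_decay : continuous (fun s => sup (E s)).
Proof.
move=> s; apply/cvgrPdist_lt => e e0.
have e3 : 0 < e / 3 by rewrite divr_gt0.
have [N Ne] := ltr_add_invr e3; rewrite add0r in Ne.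
have cM : continuous (partial_max t N) := continuous_partial_max ct.
move/cvgrPdist_lt: (cM s) => /(_ _ e3).
apply: filterS => s' /[!ltr_norml] /andP[lo hi].
have /andP[a1 a2] := sup_decay_approx N s; have /andP[a3 a4] := sup_decay_approx N s'.
set i := N.+1%:R^-1 in Ne a2 a4.
by apply/andP; split; lra.
Qed.

End DecayingSup.

Lemma peak_function (A : set S) : hausdorff_space S -> compact [set: S] ->
  closed A -> Gdelta A ->
  exists phi : S -> R, [/\ continuous phi, (forall s, 0 <= phi s <= 1) &
    (forall s, phi s = 1 <-> A s)].
Proof.
move=> hS cS cA [U [oU AU]].
have AUn n : A `&` ~` U n = set0.
  by apply/seteqP; split => // s [As]; rewrite AU in As; apply; exact: As.
have /choice[f fP] := fun n => urysohn01 R hS cS cA (open_closedC (oU n)) (AUn n).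
pose t n s := Num.min (f n s) n.+1%:R^-1.
have ct n : continuous (t n).
  move=> s; apply: (@continuous_min R S); last exact: continuous_cst.
  by case: (fP n) => cf *; exact: cf.
have t_decay n s : 0 <= t n s <= n.+1%:R^-1.
  rewrite ge_min lexx orbT andbT le_min invr_ge0 ler0n andbT.
  by case: (fP n) => _ _ _ /(_ s) /andP[].
exists (fun s => 1 - sup [set t n s | n in [set: nat]]); split.
- by apply: continuous_sub; [exact: continuous_cst | exact: continuous_sup_decay].
- move=> s; have := sup_decay_ge0 t_decay s; have := sup_decay_le1 t_decay s.
  rewrite /= => ? ?; apply/andP; split; lra.
move=> s; split=> [phi1|As].
  have sup0 : sup [set t n s | n in [set: nat]] = 0 by lra.
  rewrite AU => n _; apply: contrapT => Un.
  have := sup_decay_ge t_decay n s; rewrite sup0 /t.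
  case: (fP n) => _ _ /(_ s Un) -> _.
  by rewrite ge_min ler10 /= invr_le0 leNgt ltr0n.
suff -> : sup [set t n s | n in [set: nat]] = 0 by rewrite subr0.
apply/le_anti/andP; split; last exact: sup_decay_ge0 t_decay s.
apply: ge_sup => [|_ [n _ <-]]; first by exists (t 0%N s), 0%N.
by rewrite /t ge_min; case: (fP n) => _ /(_ s As) -> _ _; rewrite lexx.
Qed.

End PeakFunction.

Definition clinear (R : realType) (X : topologicalType) (L : (X -> R) -> R) :=
  forall (f g : X -> R) (a : R), continuous f -> continuous g ->
    L (fun x => a * f x + g x) = a * L f + L g.

Section LinearFunctionals.
Variables (R : realType) (X : topologicalType).
Hypothesis cX : compact [set: X].
Implicit Types (f g : X -> R) (L : (X -> R) -> R).

Lemma clinear0 L : clinear L -> L (fun _ => 0) = 0.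
Proof.
move=> hL; have := hL _ _ 1 (continuous_cst 0) (continuous_cst 0).
have -> : (fun _ : X => 1 * 0 + 0) = (fun _ => 0 : R).
  by apply: funext => _; rewrite mul1r addr0.
lra.
Qed.

Lemma clinearZ L a f : clinear L -> continuous f -> L (fun x => a * f x) = a * L f.
Proof.
move=> hL cf; rewrite -[a * L f]addr0 -(clinear0 hL) -hL //; last exact: continuous_cst.
by congr L; apply: funext => x; rewrite addr0.
Qed.

Lemma clinearB L f g : clinear L -> continuous f -> continuous g ->
  L (fun x => f x - g x) = L f - L g.
Proof.
move=> hL cf cg; have := hL g f (-1) cg cf.
have -> : (fun x => -1 * g x + f x) = (fun x => f x - g x).
  by apply: funext => x; rewrite mulN1r addrC.
by rewrite mulN1r addrC.
Qed.

Lemma dual_clinear L : dual_elem L -> clinear L.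
Proof. by case. Qed.

Lemma clinear_eval (S : topologicalType) (T : (X -> R) -> (S -> R)) (s : S) :
  lin_op T -> clinear (fun f => T f s).
Proof. by move=> hT f g a cf cg /=; rewrite hT. Qed.

Lemma clinear_bound L (c : R) : clinear L -> 0 <= c ->
  (forall f, continuous f -> supnorm f <= 1 -> `|L f| <= c) ->
  forall f, continuous f -> `|L f| <= c * supnorm f.
Proof.
move=> hL c0 Lc f cf; set n := supnorm f.
have [n0|n_neq0] := eqVneq n 0.
  have -> : f = (fun _ => 0).
    apply: funext => x; apply/eqP; rewrite -normr_le0 -n0.
    exact: normr_le_supnorm.
  by rewrite clinear0 // normr0 n0 mulr0.
have n_gt0 : 0 < n by rewrite lt_def n_neq0 supnorm_ge0.
have cg : continuous (fun x => n^-1 * f x) by exact: continuous_scale.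
have g1 : supnorm (fun x => n^-1 * f x) <= 1.
  apply: supnorm_le => // x; rewrite normrM gtr0_norm ?invr_gt0 //.
  by rewrite ler_pdivrMl // mulr1; exact: normr_le_supnorm.
have := Lc _ cg g1; rewrite clinearZ // normrM gtr0_norm ?invr_gt0 //.
by rewrite ler_pdivrMl // mulrC.
Qed.

Lemma dual_bound L : dual_elem L -> exists2 M, 0 <= M &
  forall f, continuous f -> `|L f| <= M * supnorm f.
Proof.
case=> _ [M LM]; exists (Num.max M 0) => [|f cf]; first by rewrite le_max lexx orbT.
apply: le_trans (LM f cf) _; apply: ler_wpM2r; first exact: supnorm_ge0.
by rewrite le_max lexx.
Qed.

Lemma has_sup_dnorm L : dual_elem L ->
  has_sup [set `|L f| | f in [set f : X -> R | continuous f /\ supnorm f <= 1]].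
Proof.
move=> dL; have [M M0 LM] := dual_bound dL; split.
  exists `|L (fun _ => 0)|, (fun _ => 0) => //.
  by split; [exact: continuous_cst | exact: supnorm0_le1].
exists M => _ [f [cf f1] <-]; apply: le_trans (LM f cf) _.
by rewrite -[leRHS]mulr1 ler_wpM2l.
Qed.

Lemma ler_dnorm L f : dual_elem L -> continuous f -> supnorm f <= 1 ->
  `|L f| <= dnorm L.
Proof. by move=> dL cf f1; apply: ub_le_sup; [case: (has_sup_dnorm dL) | exists f]. Qed.

Lemma dnorm_ge0 L : dual_elem L -> 0 <= dnorm L.
Proof. by move=> dL; apply: le_trans (ler_dnorm dL (continuous_cst 0) supnorm0_le1). Qed.

Lemma dnorm_le L (c : R) :
  (forall f, continuous f -> supnorm f <= 1 -> `|L f| <= c) -> dnorm L <= c.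
Proof.
move=> Lc; apply: ge_sup => [|_ [f [cf f1] <-]]; last exact: Lc.
exists `|L (fun _ => 0)|, (fun _ => 0) => //.
by split; [exact: continuous_cst | exact: supnorm0_le1].
Qed.

Lemma dnorm_adherent L (e : R) : dual_elem L -> 0 < e ->
  exists f, [/\ continuous f, supnorm f <= 1 & dnorm L - e < `|L f|].
Proof.
by move=> dL e0; have [_ [f [cf f1] <-] Lf] := sup_adherent e0 (has_sup_dnorm dL); exists f.
Qed.

Lemma normr_dual_le L f : dual_elem L -> continuous f -> `|L f| <= dnorm L * supnorm f.
Proof.
move=> dL cf; apply: clinear_bound => //; first exact: dual_clinear.
  exact: dnorm_ge0.
by move=> g cg g1; exact: ler_dnorm.
Qed.

End LinearFunctionals.

Section DualConstructions.
Variables (R : realType) (K S : topologicalType).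
Hypotheses (cK : compact [set: K]) (cS : compact [set: S]).

Lemma dual_elem_eval (c : R) (s : S) : `|c| = 1 -> dual_elem (fun g : S -> R => c * g s).
Proof.
move=> c1; split=> [g1 g2 a _ _|]; first ring.
by exists 1 => g cg; rewrite normrM c1 !mul1r normr_le_supnorm.
Qed.

Lemma dnorm_eval (c : R) (s : S) : `|c| = 1 -> dnorm (fun g : S -> R => c * g s) = 1.
Proof.
move=> c1; apply/le_anti/andP; split.
  apply: dnorm_le => g cg g1; rewrite normrM c1 mul1r.
  exact: le_trans (normr_le_supnorm cS s cg) g1.
have := ler_dnorm cS (dual_elem_eval s c1) (continuous_cst 1).
by rewrite mulr1 c1; apply; apply: supnorm_le => // ?; rewrite normr1.
Qed.

Lemma dnorm_le_pullback (T : (K -> R) -> (S -> R)) (L : (K -> R) -> R)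
  (L' : (S -> R) -> R) : maps_cont T -> isometry_on T -> dual_elem L' ->
  (forall f, continuous f -> L' (T f) = L f) -> dnorm L <= dnorm L'.
Proof.
move=> mT iT dL' L'T; apply: dnorm_le => f cf f1; rewrite -L'T //.
by apply: (ler_dnorm cS dL' (mT _ cf)); rewrite iT.
Qed.

Variables (w : (S -> R) -> (K -> R)) (L : (K -> R) -> R).
Hypotheses (mw : maps_cont w) (lw : lin_op w)
  (w_contr : forall g, continuous g -> supnorm (w g) <= supnorm g).

Lemma dual_elem_comp : dual_elem L -> dual_elem (fun g => L (w g)).
Proof.
move=> dL; split=> [g1 g2 a c1 c2|]; first by rewrite lw // (dual_clinear dL) //; apply: mw.
exists (dnorm L) => g cg; apply: le_trans (normr_dual_le cK dL (mw cg)) _.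
by apply: ler_wpM2l (w_contr cg); exact: dnorm_ge0.
Qed.

Lemma dnorm_comp_le : dual_elem L -> dnorm (fun g => L (w g)) <= dnorm L.
Proof.
move=> dL; apply: dnorm_le => g cg g1; apply: ler_dnorm (mw cg) _ => //.
exact: le_trans (w_contr cg) g1.
Qed.

End DualConstructions.

Section OperatorNorm.
Variables (R : realType) (K S : topologicalType).
Hypotheses (cK : compact [set: K]) (cS : compact [set: S]).
Variable v : (K -> R) -> (S -> R).
Hypotheses (mv : maps_cont v) (bv : op_bounded v).

Lemma ler_opnorm f : continuous f -> supnorm f <= 1 -> supnorm (v f) <= opnorm v.
Proof.
move=> cf f1; apply: ub_le_sup; last by exists f.
have [M vM] := bv; exists `|M| => _ [g [cg g1] <-].
apply: le_trans (vM g cg) _; apply: le_trans (ler_norm _) _.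
rewrite normrM [X in _ * X]ger0_norm ?supnorm_ge0 //.
by rewrite -[leRHS]mulr1 ler_wpM2l.
Qed.

Lemma opnorm_ge0 : 0 <= opnorm v.
Proof.
have f0 : continuous (fun _ : K => 0 : R) := continuous_cst 0.
exact: le_trans (supnorm_ge0 cS (mv f0)) (ler_opnorm f0 supnorm0_le1).
Qed.

Lemma normr_le_opnorm (lv : lin_op v) f s :
  continuous f -> `|v f s| <= opnorm v * supnorm f.
Proof.
move=> cf; apply: (clinear_bound cK (clinear_eval s lv) opnorm_ge0) cf => g cg g1.
exact: le_trans (normr_le_supnorm cS s (mv cg)) (ler_opnorm cg g1).
Qed.

End OperatorNorm.

Lemma ext_op_contraction_opnorm (R : realType) (K S : topologicalType)
    (h : K -> S) (v : (K -> R) -> (S -> R)) :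
  compact [set: K] -> compact [set: S] -> [set: K] !=set0 -> ext_op h v ->
  (forall f, continuous f -> supnorm (v f) <= supnorm f) ->
  op_bounded v /\ opnorm v = 1.
Proof.
move=> cK cS [k0 _] [mv lv vh] v_contr.
have bv : op_bounded v by exists 1 => f cf; rewrite mul1r v_contr.
split=> //; apply/le_anti/andP; split.
  apply: ge_sup => [|_ [f [cf f1] <-]]; last exact: le_trans (v_contr f cf) f1.
  exists (supnorm (v (fun _ => 0))), (fun _ => 0) => //.
  by split; [exact: continuous_cst | exact: supnorm0_le1].
have c1 : continuous (fun _ : K => 1 : R) := continuous_cst 1.
have ne : [set: K] !=set0 by exists k0.
apply: le_trans (ler_opnorm cK bv c1 _); last by rewrite supnorm_cst1.
by have := normr_le_supnorm cS (h k0) (mv _ c1); rewrite vh // normr1.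
Qed.

Section ZeroSet.
Variables (R : realType) (S : topologicalType).
Hypothesis cS : compact [set: S].
Variable psi : S -> R.
Hypotheses (cpsi : continuous psi) (psi_ge0 : forall s, 0 <= psi s).

Lemma compact_pos_lower_bound (C : set S) : compact C -> (forall s, C s -> psi s != 0) ->
  exists2 d, 0 < d & forall s, C s -> d <= psi s.
Proof.
move=> cC Cpsi.
have cI : compact (psi @` C) := continuous_compact (continuous_subspaceT cpsi) cC.
have I0 : ~ (psi @` C) 0 by move=> [s Cs /eqP]; apply/negP/Cpsi.
have : nbhs (0 : R) (~` (psi @` C)).
  by apply: open_nbhs_nbhs; split => //; rewrite openC; exact: compact_closed.
move=> /nbhs_ballP[d d0 dI]; exists d => // s Cs; rewrite leNgt; apply/negP => lt.
apply: (dI (psi s)); last by exists s.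
by rewrite -ball_normE /ball_ /= sub0r normrN ger0_norm.
Qed.

(* [q := g / max psi d], where [d > 0] bounds [psi] from below on [|g| >= e]:
   there [g = psi * q], and elsewhere [|g - psi * q| <= |g| < e]. *)
Lemma zero_set_approx g e : continuous g -> (forall s, psi s = 0 -> g s = 0) ->
  0 < e -> exists2 q, continuous q & supnorm (fun s => g s - psi s * q s) <= e.
Proof.
move=> cg gpsi e0; pose C := (fun s => `|g s|) @^-1` [set r | e <= r].
have cC : compact C.
  apply: subclosed_compact cS _ => //; apply: preimage_closed; last exact: closed_ge.
  by move=> s _; exact: continuous_norm.
have [d d0 dC] : exists2 d, 0 < d & forall s, C s -> d <= psi s.
  apply: (compact_pos_lower_bound cC) => s Cs; apply/eqP => /gpsi gs.
  by move: Cs; rewrite /C /= gs normr0 leNgt e0.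
pose m s := Num.max (psi s) d.
have m0 s : 0 < m s by rewrite lt_max d0 orbT.
have cm : continuous m by apply: max_fun_continuous => //; exact: continuous_cst.
exists (fun s => g s / m s).
  by apply: continuous_mul => // s; apply: continuousV; [rewrite gt_eqF | exact: cm].
apply: supnorm_le => [|s]; first exact: ltW.
have -> : g s - psi s * (g s / m s) = g s * (1 - psi s / m s).
  by rewrite mulrBr mulr1 mulrCA mulrA.
have [Cs|nCs] := pselect (C s).
  have ps : 0 < psi s := lt_le_trans d0 (dC s Cs).
  by rewrite /m max_l ?dC // divff ?gt_eqF // subrr mulr0 normr0 ltW.
have r0 : 0 <= psi s / m s by rewrite divr_ge0 // ltW.
have r1 : psi s / m s <= 1 by rewrite ler_pdivrMr // mul1r le_max lexx.
have gs : `|g s| < e by rewrite ltNge; apply/negP.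
rewrite normrM [X in _ * X]ger0_norm ?subr_ge0 //.
have := normr_ge0 (g s); nra.
Qed.

Lemma dual_vanish_zero_set L : dual_elem L ->
  (forall q, continuous q -> L (fun s => psi s * q s) = 0) ->
  forall g, continuous g -> (forall s, psi s = 0 -> g s = 0) -> L g = 0.
Proof.
move=> dL Lpsi g cg gpsi; have [M M0 LM] := dual_bound cS dL.
apply: (eq0_norm_small M0) => e e0.
have [q cq gq] := zero_set_approx cg gpsi e0.
have cpq : continuous (fun s => psi s * q s) by exact: continuous_mul.
have <- : L (fun s => g s - psi s * q s) = L g.
  by rewrite (clinearB (dual_clinear dL)) // Lpsi // subr0.
apply: le_trans (LM _ (continuous_sub cg cpq)) _.
exact: ler_wpM2l.
Qed.

End ZeroSet.

Definition unique_norm_preserving_extension (R : realType) (K S : topologicalType)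
    (T : (K -> R) -> (S -> R)) :=
  forall x : (K -> R) -> R, dual_elem x ->
    exists y : (S -> R) -> R,
      [/\ dual_elem y,
          (forall f : K -> R, continuous f -> y (T f) = x f),
          dnorm y = dnorm x &
          forall y' : (S -> R) -> R, dual_elem y' ->
            (forall f : K -> R, continuous f -> y' (T f) = x f) ->
            dnorm y' = dnorm x ->
            forall g : S -> R, continuous g -> y' g = y g].

Lemma U_embeddingP (R : realType) (K S : topologicalType) (T : (K -> R) -> (S -> R)) :
  U_embedding T <->
  [/\ maps_cont T, lin_op T, isometry_on T & unique_norm_preserving_extension T].
Proof. by split=> [[? [? [? ?]]]|[? ? ? ?]]. Qed.

Section PeakProduct.
Variables (R : realType) (K S : topologicalType).
Hypotheses (cK : compact [set: K]) (cS : compact [set: S]).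
Variables (h : K -> S) (v : (K -> R) -> (S -> R)) (phi : S -> R).
Hypotheses (ch : continuous h) (mv : maps_cont v) (lv : lin_op v)
  (vh : forall f, continuous f -> forall k, v f (h k) = f k)
  (v_contr : forall f, continuous f -> forall s, `|v f s| <= supnorm f)
  (cphi : continuous phi) (phi01 : forall s, 0 <= phi s <= 1)
  (phi1 : forall s, phi s = 1 <-> range h s).

Let T f s := phi s * v f s.

Let phi_h k : phi (h k) = 1. Proof. by apply/phi1; exists k. Qed.

Let T_h f k : continuous f -> T f (h k) = f k.
Proof. by move=> cf; rewrite /T phi_h mul1r vh. Qed.

Let mT f : continuous f -> continuous (T f).
Proof. move=> cf; apply: continuous_mul => //; exact: mv. Qed.

Let lT : lin_op T.
Proof. by move=> f g a cf cg; rewrite /T lv //; apply: funext => s /=; ring. Qed.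

Let supnorm_T f : continuous f -> supnorm (T f) = supnorm f.
Proof.
move=> cf; apply/le_anti/andP; split.
  apply: supnorm_le => [|s]; first exact: supnorm_ge0.
  have /andP[p0 p1] := phi01 s; rewrite normrM ger0_norm //.
  by apply: le_trans (v_contr cf s); rewrite ler_piMl.
have cTf := mT cf.
apply: supnorm_le => [|k]; first exact (supnorm_ge0 cS cTf).
by rewrite -(T_h k cf); exact: normr_le_supnorm.
Qed.

Let cgh (g : S -> R) : continuous g -> continuous (fun k => g (h k)).
Proof. by move=> cg k; apply: continuous_comp; [exact: ch | exact: cg]. Qed.

Let lin_gh : lin_op (fun (g : S -> R) k => g (h k)).
Proof. by []. Qed.

Let supnorm_gh (g : S -> R) : continuous g -> supnorm (fun k => g (h k)) <= supnorm g.
Proof.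
by move=> cg; apply: supnorm_le => [|k]; [exact: supnorm_ge0 | exact: normr_le_supnorm].
Qed.

Section Extension.
Variable x : (K -> R) -> R.
Hypothesis dx : dual_elem x.

Let y g := x (fun k => g (h k)).

Let dy : dual_elem y.
Proof. exact: (dual_elem_comp cK cgh lin_gh supnorm_gh dx). Qed.

Let yT f : continuous f -> y (T f) = x f.
Proof. by move=> cf; rewrite /y; congr x; apply: funext => k; rewrite T_h. Qed.

Let dnorm_y : dnorm y = dnorm x.
Proof.
apply/le_anti/andP; split; last exact: (dnorm_le_pullback cS mT supnorm_T dy yT).
exact: (dnorm_comp_le cK cgh supnorm_gh dx).
Qed.

Section NormPreservingExtension.
Variable y' : (S -> R) -> R.
Hypotheses (dy' : dual_elem y') (y'T : forall f, continuous f -> y' (T f) = x f)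
  (dnorm_y' : dnorm y' = dnorm x).

Let supnorm_mix t f g : `|t| = 1 -> continuous f -> supnorm f <= 1 ->
  continuous g -> supnorm g <= 1 ->
  supnorm (fun s => t * ((1 - phi s) * g s) + T f s) <= 1.
Proof.
move=> t1 cf f1 cg g1; apply: supnorm_le => // s; rewrite /T.
have /andP[p0 p1] := phi01 s.
have gs := le_trans (normr_le_supnorm cS s cg) g1.
have vs := le_trans (v_contr cf s) f1.
apply: le_trans (ler_normD _ _) _.
rewrite !normrM t1 mul1r (ger0_norm p0) ger0_norm ?subr_ge0 //.
have := normr_ge0 (g s); have := normr_ge0 (v f s); nra.
Qed.

Lemma extension_vanish_off_peak g : continuous g ->
  y' (fun s => (1 - phi s) * g s) = 0.
Proof.
have cw (g0 : S -> R) : continuous g0 -> continuous (fun s => (1 - phi s) * g0 s).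
  by move=> cg0; apply: continuous_mul => //; exact: continuous_sub (continuous_cst 1) cphi.
have lw : clinear (fun g0 => y' (fun s => (1 - phi s) * g0 s)).
  move=> g1 g2 a c1 c2 /=; rewrite -(dual_clinear dy' a (cw _ c1) (cw _ c2)).
  by congr y'; apply: funext => s; ring.
move=> cg; apply/eqP; rewrite -normr_le0 -(mul0r (supnorm g)).
apply: (clinear_bound cS lw (lexx 0)) cg => g1 cg1 g11.
rewrite normr_le0; apply/eqP/(eq0_norm_small ler01) => e e0; rewrite mul1r.
have [f [cf f1 fe]] := dnorm_adherent cK dx e0.
have xf_bound t : `|t| = 1 -> `|x f + t * y' (fun s => (1 - phi s) * g1 s)| <= dnorm x.
  move=> t1; rewrite -dnorm_y' -y'T // addrC -(dual_clinear dy' t (cw _ cg1) (mT cf)).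
  apply: (ler_dnorm cS dy'); first exact: continuous_lincomb (cw _ cg1) (mT cf).
  exact: supnorm_mix.
have := xf_bound 1 (normr1 _); have := xf_bound (-1) (normrN1 _).
rewrite mul1r mulN1r => b2 b1; have := normD_normB_le b1 b2; lra.
Qed.

Lemma extension_unique g : continuous g -> y' g = y g.
Proof.
move=> cg; have cgT := mT (cgh cg).
have cphi' : continuous (fun s => 1 - phi s) := continuous_sub (continuous_cst 1) cphi.
have : y' (fun s => g s - T (fun k => g (h k)) s) = 0.
  apply: (dual_vanish_zero_set cS cphi' _ dy') => [s|q cq||s].
  - by rewrite subr_ge0; case/andP: (phi01 s).
  - exact: extension_vanish_off_peak.
  - exact: continuous_sub.
  move=> /eqP; rewrite subr_eq0 eq_sym => /eqP/phi1[k _ <-].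
  by rewrite T_h ?subrr //; exact: cgh.
rewrite (clinearB (dual_clinear dy')) // y'T; last exact: cgh.
by move/eqP; rewrite subr_eq0 => /eqP ->.
Qed.

End NormPreservingExtension.

Lemma peak_product_extension : exists y : (S -> R) -> R,
  [/\ dual_elem y, (forall f, continuous f -> y (T f) = x f), dnorm y = dnorm x &
      forall y', dual_elem y' -> (forall f, continuous f -> y' (T f) = x f) ->
      dnorm y' = dnorm x -> forall g, continuous g -> y' g = y g].
Proof. by exists y; split => // y' dy' y'T dnorm_y' g; exact: extension_unique. Qed.

End Extension.

Lemma U_embedding_peak_product : U_embedding T.
Proof.
apply/U_embeddingP; split; [exact: mT | exact: lT | exact: supnorm_T |].
exact: peak_product_extension.
Qed.

End PeakProduct.

Lemma U_embedding_of_Gdelta_extension (R : realType) (K S : topologicalType)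
  (h : K -> S) (v : (K -> R) -> (S -> R)) :
  compact [set: K] -> hausdorff_space S -> compact [set: S] -> continuous h ->
  ext_op h v -> op_bounded v -> opnorm v = 1 -> Gdelta (range h) ->
  exists T : (K -> R) -> (S -> R), U_embedding T.
Proof.
move=> cK hS cS ch [mv lv vh] bv v1 Gh.
have [phi [cphi phi01 phi1]] := peak_function R hS cS (closed_range_compact hS cK ch) Gh.
have v_contr f : continuous f -> forall s, `|v f s| <= supnorm f.
  by move=> cf s; rewrite -[supnorm f]mul1r -v1; exact: normr_le_opnorm.
exists (fun f s => phi s * v f s).
exact: (U_embedding_peak_product cK cS ch mv lv vh v_contr cphi phi01 phi1).
Qed.

Definition peak_at (R : realType) (K : topologicalType) (k : K) (g : K -> R) :=
  [/\ continuous g, forall k', 0 <= g k' <= 1 & g k = 1].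

Section PeakAt.
Variables (R : realType) (K : topologicalType) (k : K).
Implicit Types g : K -> R.

Lemma peak_at_cst1 : peak_at k (fun _ => 1 : R).
Proof. by split=> // [|k']; [exact: continuous_cst | rewrite ler01 lexx]. Qed.

Lemma peak_at_mid g1 g2 : peak_at k g1 -> peak_at k g2 ->
  peak_at k (fun k' => 2^-1 * g1 k' + 2^-1 * g2 k').
Proof.
move=> [cg1 g1_01 g1k] [cg2 g2_01 g2k]; split.
- by apply: continuous_add; exact: continuous_scale.
- move=> k'; have /andP[? ?] := g1_01 k'; have /andP[? ?] := g2_01 k'.
  by apply/andP; split; lra.
- by rewrite g1k g2k; lra.
Qed.

Lemma supnorm_peak_at g : compact [set: K] -> peak_at k g -> supnorm g = 1.
Proof.
move=> cK [cg g01 gk]; apply/le_anti/andP; split.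
  by apply: supnorm_le => // k'; have /andP[? ?] := g01 k'; rewrite ger0_norm.
by rewrite -[leLHS](normr1 R) -gk normr_le_supnorm.
Qed.

End PeakAt.

Section UEmbeddingPoints.
Variables (R : realType) (K S : topologicalType).
Hypotheses (hK : hausdorff_space K) (cK : compact [set: K])
  (hS : hausdorff_space S) (cS : compact [set: S]) (neK : [set: K] !=set0).
Variable T : (K -> R) -> (S -> R).
Hypotheses (mT : maps_cont T) (lT : lin_op T) (iT : isometry_on T)
  (uT : unique_norm_preserving_extension T).

Let c1 : continuous (fun _ : K => 1 : R). Proof. exact: continuous_cst. Qed.

Let u := T (fun _ => 1).

Let cu : continuous u. Proof. exact: mT. Qed.

Let normr_T_le f s : continuous f -> `|T f s| <= supnorm f.
Proof. by move=> cf; rewrite -iT //; exact (normr_le_supnorm cS s (mT cf)). Qed.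

Let normr_u_le1 s : `|u s| <= 1.
Proof. by rewrite -(supnorm_cst1 R cK neK); exact: normr_T_le. Qed.

Let neS : [set: S] !=set0.
Proof.
apply/set0P/negP => /eqP S0.
have := iT c1; rewrite supnorm_empty // supnorm_cst1 // => /eqP.
by rewrite eq_sym oner_eq0.
Qed.

Lemma peak_point_exists k : exists s, forall g, peak_at k g -> `|T g s| = 1.
Proof.
apply: (compact_directed_meet (D := peak_at k) (Z := fun g => [set s | `|T g s| = 1]) cS).
- by exists (fun _ => 1); exact: peak_at_cst1.
- move=> g [cg _ _]; apply: (@preimage_closed S R (fun s => `|T g s|) [set r | r = 1]).
    by move=> s _; apply: continuous_norm; exact: mT.
  exact: closed_eq.
- move=> g gk; have [cg _ _] := gk; have [s Tgs] := supnorm_attained cS (mT cg) neS.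
  by exists s; rewrite /= Tgs iT // (supnorm_peak_at cK gk).
move=> g1 g2 g1k g2k; exists (fun k' => 2^-1 * g1 k' + 2^-1 * g2 k').
  exact: peak_at_mid.
have [cg1 _ _] := g1k; have [cg2 _ _] := g2k.
move=> s /=; rewrite (clinear_eval s lT) ?(clinearZ _ (clinear_eval s lT)) //;
  last exact: continuous_scale.
apply: normr_mid_eq1.
- by rewrite -(supnorm_peak_at cK g1k); exact: normr_T_le.
- by rewrite -(supnorm_peak_at cK g2k); exact: normr_T_le.
Qed.

Section PeakPoint.
Variables (k : K) (s : S).
Hypothesis peak_s : forall g, peak_at k g -> `|T g s| = 1.

(* [|T g s| = 1] for the peak function [g := 1 - |f|], while [||g +- f|| <= 1]. *)
Let peak_point_vanish_small f : continuous f -> f k = 0 -> supnorm f <= 1 ->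
  T f s = 0.
Proof.
move=> cf fk f1; have f_le1 k' : `|f k'| <= 1 := le_trans (normr_le_supnorm cK k' cf) f1.
pose g k' := 1 - `|f k'|.
have cg : continuous g := continuous_sub (continuous_cst 1) (continuous_norm cf).
have gk : peak_at k g.
  split=> // [k'|]; last by rewrite /g fk normr0 subr0.
  by have := f_le1 k'; have := normr_ge0 (f k'); rewrite /g => ? ?; apply/andP; split; lra.
have mix t : `|t| = 1 -> `|T g s + t * T f s| <= 1.
  move=> t1; rewrite addrC -(clinear_eval s lT) //.
  apply: le_trans (normr_T_le s (continuous_lincomb t cf cg)) _.
  apply: supnorm_le => // k'; rewrite /g; have := f_le1 k'.
  have : `|t * f k'| = `|f k'| by rewrite normrM t1 mul1r.
  move: (t * f k') (f k') => a b ab b1.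
  apply: le_trans (ler_normD _ _) _.
  by rewrite ab [X in _ + X]ger0_norm ?subr_ge0 // addrC subrK.
have := mix 1 (normr1 _); have := mix (-1) (normrN1 _); rewrite mul1r mulN1r => m2 m1.
have := normD_normB_le m1 m2; rewrite peak_s // => Tfs.
by apply/normr0_eq0/le_anti/andP; split; [lra | exact: normr_ge0].
Qed.

Lemma peak_point_vanish f : continuous f -> f k = 0 -> T f s = 0.
Proof.
move=> cf fk; set c := supnorm f + 1.
have c_gt0 : 0 < c by rewrite ltr_wpDl // supnorm_ge0.
have : T (fun k' => c^-1 * f k') s = 0.
  apply: peak_point_vanish_small; [exact: continuous_scale | by rewrite fk mulr0 |].
  apply: supnorm_le => // k'; rewrite normrM gtr0_norm ?invr_gt0 // ler_pdivrMl // mulr1.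
  by apply: le_trans (normr_le_supnorm cK k' cf) _; rewrite lerDl.
rewrite (clinearZ _ (clinear_eval s lT)) // => /eqP.
by rewrite mulf_eq0 invr_eq0 gt_eqF // => /eqP.
Qed.

End PeakPoint.

Let represents k s := `|u s| = 1 /\ forall f, continuous f -> T f s = f k * u s.

Lemma represents_exists k : exists s, represents k s.
Proof.
have [s peak_s] := peak_point_exists k; exists s.
split; first exact: peak_s (peak_at_cst1 _ k).
move=> f cf; have fk : (fun k' => - f k * 1 + f k') k = 0 by rewrite mulr1 addNr.
have := peak_point_vanish peak_s (continuous_lincomb (- f k) c1 cf) fk.
by rewrite (clinear_eval s lT) // -/u mulNr => /eqP; rewrite addrC subr_eq0 => /eqP.
Qed.

Lemma represents_functional k s : represents k s ->
  forall f, continuous f -> u s * T f s = f k.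
Proof. by move=> [us Ts] f cf; rewrite Ts // mulrCA normr_eq1_mulrr // mulr1. Qed.

Lemma represents_unique k s s' : represents k s -> represents k s' -> s = s'.
Proof.
move=> ks ks'.
have [y [_ _ _ y_uniq]] := uT (dual_elem_eval cK k (normr1 R)).
have ev_y s0 g : represents k s0 -> continuous g -> u s0 * g s0 = y g.
  move=> ks0 cg; apply: (y_uniq _ (dual_elem_eval cS s0 ks0.1)) => // [f cf|].
    by rewrite (represents_functional ks0 cf) mul1r.
  by rewrite (dnorm_eval cS s0 ks0.1) (dnorm_eval cK k (normr1 R)).
have ev_eq g : continuous g -> u s * g s = u s' * g s' by move=> cg; rewrite !ev_y.
have uss' : u s = u s' by have := ev_eq _ (continuous_cst 1); rewrite !mulr1.
apply: contrapT => ss'.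
have [g [cg gs gs']] := separate_points R hS cS ss'.
have := ev_eq g cg; rewrite uss' gs gs' // mulr1 mulr0 => /eqP.
by rewrite -normr_eq0 ks'.1 oner_eq0.
Qed.

Let h k := projT1 (cid (represents_exists k)).

Let represents_h k : represents k (h k). Proof. exact: projT2 (cid _). Qed.

Lemma h_injective : injective h.
Proof.
move=> k1 k2 hk; apply: contrapT => k12.
have [g [cg gk1 gk2]] := separate_points R hK cK k12.
have := (represents_h k1).2 g cg; rewrite hk (represents_h k2).2 // gk1 gk2 //.
by rewrite mul0r mul1r => /esym/eqP; rewrite -normr_eq0 (represents_h k2).1 oner_eq0.
Qed.

Lemma h_continuous : continuous h.
Proof.
move=> k.
have cluster_represents s : cluster (h @ k) s -> represents k s.
  move=> cl; have us : `|u s| = 1.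
    apply: (cluster_comp_eq (continuous_norm cu) (continuous_cst 1) _ cl) => k'.
    exact: (represents_h k').1.
  split=> // f cf; rewrite -(cluster_comp_eq (continuous_mul cu (mT cf)) cf _ cl).
    by rewrite mulrAC normr_eq1_mulrr // mul1r.
  by move=> k'; exact: represents_functional (represents_h k') f cf.
have cluster_h s : cluster (h @ k) s -> s = h k.
  by move=> /cluster_represents ks; exact: represents_unique ks (represents_h k).
apply: (@compact_cluster_set1 S (h k) (h @ k) setT hS cS filterT _ filterT).
apply/seteqP; split=> [s|_ ->]; first exact: cluster_h.
by have [s [_ /[dup] /cluster_h <-]] := @cS (h @ k) _ filterT.
Qed.

Let cgh (g : S -> R) : continuous g -> continuous (fun k => g (h k)).
Proof. by move=> cg k; apply: continuous_comp; [exact: h_continuous | exact: cg]. Qed.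

(* Off [range h], [g |-> u s * g s] and [g |-> x (u o h * g o h)] would be two
   distinct norm-preserving extensions of the same functional. *)
Lemma normr_u_eq1_range s : `|u s| = 1 -> range h s.
Proof.
move=> us; pose x f := u s * T f s.
have T_contr f : continuous f -> supnorm (T f) <= supnorm f by move=> cf; rewrite iT.
have dx : dual_elem x := dual_elem_comp cS mT lT T_contr (dual_elem_eval cS s us).
have x1 : dnorm x = 1.
  apply/le_anti/andP; split.
    rewrite -(dnorm_eval cS s us).
    exact (dnorm_comp_le cS mT T_contr (dual_elem_eval cS s us)).
  have := ler_dnorm cK dx c1; rewrite supnorm_cst1 // /x -/u normr_eq1_mulrr // normr1.
  by apply.
pose w (g : S -> R) k := u (h k) * g (h k).
have mw : maps_cont w by move=> g cg; exact: continuous_mul (cgh cu) (cgh cg).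
have lw : lin_op w by move=> g1 g2 a _ _; apply: funext => k; rewrite /w; ring.
have w_contr g : continuous g -> supnorm (w g) <= supnorm g.
  move=> cg; apply: supnorm_le => [|k]; first exact: supnorm_ge0.
  by rewrite normrM (represents_h k).1 mul1r normr_le_supnorm.
have dy2 := dual_elem_comp cK mw lw w_contr dx.
have y2T f : continuous f -> x (w (T f)) = x f.
  move=> cf; congr x; apply: funext => k.
  exact: represents_functional (represents_h k) f cf.
have [y [_ _ _ y_uniq]] := uT dx.
have ev_y2 g : continuous g -> u s * g s = x (w g).
  move=> cg; rewrite (y_uniq _ (dual_elem_eval cS s us)) //; last by rewrite dnorm_eval.
  apply: esym; apply: (y_uniq _ dy2) => //; apply/le_anti/andP; split.
    exact (dnorm_comp_le cK mw w_contr dx).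
  exact (dnorm_le_pullback cS mT iT dy2 y2T).
apply: contrapT => ns.
have [g [cg gs gh]] := separate_point R hS cS (closed_range_compact hS cK h_continuous) ns.
have := ev_y2 g cg; rewrite gs mulr1.
have -> : w g = (fun _ => 0) by apply: funext => k; rewrite /w gh ?mulr0 //; exists k.
by rewrite (clinear0 (dual_clinear dx)) => /eqP; rewrite -normr_eq0 us oner_eq0.
Qed.

Lemma range_h : range h = [set s | `|u s| = 1].
Proof.
apply/seteqP; split=> [_ [k _ <-]|s]; first exact: (represents_h k).1.
exact: normr_u_eq1_range.
Qed.

Lemma Gdelta_extension_of_U_embedding : exists h : K -> S,
  [/\ top_embedding h,
      (exists v : (K -> R) -> (S -> R), [/\ ext_op h v, op_bounded v & opnorm v = 1]) &
      Gdelta (range h)].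
Proof.
exists h; split.
- exact: top_embedding_compact cK hS h_continuous h_injective.
- exists (fun f s => u s * T f s).
  have ev : ext_op h (fun f s => u s * T f s).
    split=> [f cf|f g a cf cg|f cf k]; first exact: continuous_mul cu (mT cf).
      by apply: funext => s; rewrite lT //; ring.
    exact: represents_functional (represents_h k) f cf.
  have v_contr f : continuous f -> supnorm (fun s => u s * T f s) <= supnorm f.
    move=> cf; apply: supnorm_le => [|s]; first exact: supnorm_ge0.
    rewrite normrM; apply: le_trans (normr_T_le s cf).
    by rewrite ler_piMl // normr_u_le1.
  by have [bv v1] := ext_op_contraction_opnorm cK cS neK ev v_contr.
- by rewrite range_h; exact: Gdelta_normr_eq1 cu normr_u_le1.
Qed.

End UEmbeddingPoints.

Theorem theorem6p22 (R : realType) (K S : topologicalType)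
  (hK : hausdorff_space K) (cK : compact [set: K])
  (hS : hausdorff_space S) (cS : compact [set: S])
  (neK : [set: K] !=set0) :
  (exists T : (K -> R) -> (S -> R), U_embedding T) <->
  (exists h : K -> S,
     [/\ top_embedding h,
         (exists v : (K -> R) -> (S -> R), [/\ ext_op h v, op_bounded v & opnorm v = 1]) &
         Gdelta (range h)]).
Proof.
split=> [[T /U_embeddingP[mT lT iT uT]]|[h [[ch _ _] [v [ev bv v1]] Gh]]].
  exact (Gdelta_extension_of_U_embedding hK cK hS cS neK mT lT iT uT).
exact: U_embedding_of_Gdelta_extension cK hS cS ch ev bv v1 Gh.
Qed.
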